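(* Let $R$ be a commutative multiplicative hyperring with identity, let $\alpha$ be a good endomorphism of $R$, let $I$ be an $\alpha$-prime hyperideal of $R$, and let $S$ be a subset of $R$. Then $(I:S)$ is an $\alpha$-prime hyperideal of $R$.
   Context: A multiplicative hyperring is an abelian group $(R,+)$ with a hyperoperation $\circ:R\times R\to \mathcal P^*(R)$ (nonempty subsets) such that $a\circ(b\circ c)=(a\circ b)\circ c$, $a\circ(b+c)\subseteq a\circ b+a\circ c$, $(b+c)\circ a\subseteq b\circ a+c\circ a$, and $a\circ(-b)=(-a)\circ b=-(a\circ b)$. Products of subsets are unions of elementwise products. Commutative means $a\circ b=b\circ a$. An identity $1$ satisfies $a\in1\circ a$ for all $a$. A hyperideal is a nonempty $I\subseteq R$ closed under subtraction with $r\circ x\subseteq I$ for $r\in R$, $x\in I$. Standing assumption: every hyperideal is a $\mathbf C$-hyperideal, i.e. for every finite product $A=r_1\circ\cdots\circ r_n$, $A\cap I\ne\emptyset$ implies $A\subseteq I$. $(I:S)=\{r\in R: r\circ s\subseteq I \text{ for all } s\in S\}$. A good endomorphism $\alpha$ satisfies $\alpha(x+y)=\alpha(x)+\alpha(y)$ and $\alpha(x\circ y)=\alpha(x)\circ\alpha(y)$. A hyperideal $I$ is $\alpha$-prime if for all $x,y$, $x\circ y\subseteq I$ implies $x\in I$ or $\alpha(y)\in I$; properness is not part of this definition. *)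

From mathcomp Require Import all_boot all_algebra.
Set Implicit Arguments. Unset Strict Implicit. Unset Printing Implicit Defensive.
Import GRing.Theory.
Local Open Scope ring_scope.

Section Hyper.
Variable R : zmodType.

(* A hyperoperation: mul a b is the subset a o b of R. *)
Definition hop := R -> R -> R -> Prop.

Definition set_eq (A B : R -> Prop) := forall z, A z <-> B z.
Definition subset (A B : R -> Prop) := forall z, A z -> B z.
Definition single (a : R) : R -> Prop := fun z => z = a.

Definition setmul (mul : hop) (A B : R -> Prop) : R -> Prop :=
  fun z => exists a b, A a /\ B b /\ mul a b z.
Definition setadd (A B : R -> Prop) : R -> Prop :=
  fun z => exists a b, A a /\ B b /\ z = a + b.
Definition setopp (A : R -> Prop) : R -> Prop := fun z => A (- z).

Definition is_mult_hyperring (mul : hop) : Prop :=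
  (forall a b, exists z, mul a b z) /\
  (forall a b c, set_eq (setmul mul (single a) (mul b c))
                        (setmul mul (mul a b) (single c))) /\
  (forall a b c, subset (mul a (b + c)) (setadd (mul a b) (mul a c))) /\
  (forall a b c, subset (mul (b + c) a) (setadd (mul b a) (mul c a))) /\
  (forall a b, set_eq (mul a (- b)) (setopp (mul a b))) /\
  (forall a b, set_eq (mul (- a) b) (setopp (mul a b))).

Definition hcommutative (mul : hop) : Prop :=
  forall a b, set_eq (mul a b) (mul b a).

Definition has_identity (mul : hop) : Prop :=
  exists one : R, forall a, mul one a a.

Definition good_endo (mul : hop) (alpha : R -> R) : Prop :=
  (forall x y, alpha (x + y) = alpha x + alpha y) /\
  (forall x y, set_eq (fun z => exists w, mul x y w /\ z = alpha w)
                      (mul (alpha x) (alpha y))).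

Definition hyperideal (mul : hop) (I : R -> Prop) : Prop :=
  (exists x, I x) /\
  (forall x y, I x -> I y -> I (x - y)) /\
  (forall r x, I x -> subset (mul r x) I).

(* finite product r1 o r2 o ... o rn, n >= 1 (left-bracketed) *)
Definition hprod (mul : hop) (r1 : R) (rs : seq R) : R -> Prop :=
  foldl (fun A r => setmul mul A (single r)) (single r1) rs.

Definition C_hyperideal (mul : hop) (I : R -> Prop) : Prop :=
  forall r1 rs, (exists z, hprod mul r1 rs z /\ I z) ->
                subset (hprod mul r1 rs) I.

Definition hcolon (mul : hop) (I S : R -> Prop) : R -> Prop :=
  fun r => forall s, S s -> subset (mul r s) I.

(* alpha-prime (properness not required) *)
Definition alpha_prime (mul : hop) (alpha : R -> R) (I : R -> Prop) : Prop :=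
  forall x y, subset (mul x y) I -> I x \/ I (alpha y).

End Hyper.

(* Commutativity and associativity let the factors of x o s o y be permuted, so
   (x o s) o y = (x o y) o s.  If x o y lies in (I:S) but x does not, some w in
   x o s lies outside I while w o y lies in I; alpha-primeness of I then puts
   alpha y in I, which is contained in (I:S). *)
From Pilot Require Import Defs.
From mathcomp Require Import all_boot all_algebra.
From Stdlib Require Import Classical.
Set Implicit Arguments. Unset Strict Implicit. Unset Printing Implicit Defensive.
Import GRing.Theory.
Local Open Scope ring_scope.

Section Hyperideal.
Variables (R : zmodType) (mul : hop R) (I : R -> Prop).
Hypothesis idealI : hyperideal mul I.

Lemma hyperideal0 : I 0.
Proof.
have [[x Ix] [subI _]] := idealI.
by rewrite -(subrr x); apply: subI.
Qed.

Lemma hyperidealN x : I x -> I (- x).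
Proof. by move=> Ix; rewrite -sub0r; apply: idealI.2.1 => //; apply: hyperideal0. Qed.

Lemma hyperidealD x y : I x -> I y -> I (x + y).
Proof. by move=> Ix Iy; rewrite -(opprK y); apply: idealI.2.1 => //; apply: hyperidealN. Qed.

End Hyperideal.

Section HyperColon.
Variables (R : zmodType) (mul : hop R).
Hypothesis hringR : is_mult_hyperring mul.
Hypothesis mulC : hcommutative mul.

Lemma hmul_assoc_mem a b c w z :
  mul a b w -> mul w c z -> exists2 v, mul b c v & mul a v z.
Proof.
move=> abw wcz.
have : setmul mul (mul a b) (single c) z by exists w, c.
by move/(hringR.2.1 a b c) => [_ [v [-> [bcv avz]]]]; exists v.
Qed.

Lemma hmul_assocV_mem a b c v z :
  mul b c v -> mul a v z -> exists2 w, mul a b w & mul w c z.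
Proof.
move=> bcv avz.
have : setmul mul (single a) (mul b c) z by exists a, v.
by move/(hringR.2.1 a b c) => [w [_ [abw [-> wcz]]]]; exists w.
Qed.

Lemma hmul_swap_mem x s y w z :
  mul x s w -> mul w y z -> exists2 a, mul x y a & mul a s z.
Proof.
move=> xsw wyz; have [v syv xvz] := hmul_assoc_mem xsw wyz.
by apply: (hmul_assocV_mem (b := y) (v := v)) => //; apply/mulC.
Qed.

Variables (I S : R -> Prop).
Hypothesis idealI : hyperideal mul I.

Lemma hyperideal_sub_hcolon x : I x -> hcolon mul I S x.
Proof. by move=> Ix s _ z /mulC; apply: idealI.2.2. Qed.

Lemma hcolon_hyperideal : hyperideal mul (hcolon mul I S).
Proof.
split; first by exists 0; apply/hyperideal_sub_hcolon/(hyperideal0 idealI).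
split.
  move=> x y Hx Hy s Ss z /(hringR.2.2.2.1 s) [a [b [xsa [ysb ->]]]].
  apply: (hyperidealD idealI); first exact: Hx xsa.
  rewrite -(opprK b); apply: (hyperidealN idealI).
  by apply: (Hy s Ss); apply/hringR.2.2.2.2.2.
move=> r x Hx z rxz s Ss w zsw.
have [b xsb rbw] := hmul_assoc_mem rxz zsw.
exact: idealI.2.2 _ _ (Hx s Ss b xsb) w rbw.
Qed.

Lemma alpha_prime_hcolon alpha :
  alpha_prime mul alpha I -> alpha_prime mul alpha (hcolon mul I S).
Proof.
move=> primeI x y xyI.
case: (classic (hcolon mul I S x)) => [|notIx]; [by left | right].
have [s [Ss [w [xsw notIw]]]] : exists s, S s /\ exists w, mul x s w /\ ~ I w.
  apply: NNPP => noW; apply: notIx => s Ss w xsw.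
  by apply: NNPP => notIw; apply: noW; exists s; split=> //; exists w.
have wyI : Defs.subset (mul w y) I.
  move=> z wyz; have [a xya asz] := hmul_swap_mem xsw wyz.
  exact: xyI a xya s Ss z asz.
apply: hyperideal_sub_hcolon.
by case: (primeI w y wyI).
Qed.

End HyperColon.

Theorem mainTheorem7 (R : zmodType) (mul : hop R) (alpha : R -> R)
  (I S : R -> Prop) :
  is_mult_hyperring mul ->
  hcommutative mul ->
  has_identity mul ->
  (forall J : R -> Prop, hyperideal mul J -> C_hyperideal mul J) ->
  good_endo mul alpha ->
  hyperideal mul I -> alpha_prime mul alpha I ->
  hyperideal mul (hcolon mul I S) /\ alpha_prime mul alpha (hcolon mul I S).
Proof.
move=> hringR mulC _ _ _ idealI primeI.
split; first exact: hcolon_hyperideal.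
exact: alpha_prime_hcolon.
Qed.
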